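(* Let $M$ be a $\Lambda_{\mathrm{NF}}$-inhabitant of the formula $\phi$. If $M$ is not locally compact, then there exist two addresses $b<b'$ in $\mathrm{dom}(M)$ such that $M|_b$ and $M|_{b'}$ are of the same kind and $\mathrm{Free}(M|_b)=\mathrm{Free}(M|_{b'})$. Moreover, $M$ is then not a $\Lambda_{\mathrm{NF}}$-inhabitant of $\phi$ of minimal size (size meaning $|\mathrm{dom}(M)|$).
   Context: Formulas are built from atoms with $\to$; $\mathrm{Sub}(\phi)$ is the set of subformulas of $\phi$. Let $\mathcal X$ be a countably infinite set of variables with an injective map $\mathcal O:\mathcal X\to\mathbb N$; $x<y$ iff $\mathcal O(x)<\mathcal O(y)$. Terms are pure $\lambda$-terms over $\mathcal X$, not identified up to $\alpha$-conversion; no two $\lambda$'s bind the same variable and no variable is both free and bound. $\mathrm{Free}(M)$ is the strictly increasing sequence of free variables of $M$. HRM terms: variables; $\lambda x.M$ with $M$ HRM and $x$ the greatest free variable of $M$; $(MN)$ with $M,N$ HRM and every free variable of $M$ $\le$ some free variable of $N$. Fix $\Omega$ from variables to formulas with each $\Omega^{-1}(\phi)$ infinite. Typing: $x:\Omega(x)$; $\lambda x.M:\chi\to\psi$ if $x:\chi$, $M:\psi$, $\lambda x.M$ HRM; $(MN):\psi$ if $M:\chi\to\psi$, $N:\chi$, $(MN)$ HRM. $\Lambda_{\mathrm{NF}}$ is the set of typed $\beta$-normal terms; a $\Lambda_{\mathrm{NF}}$-inhabitant of $\phi$ is a closed term of $\Lambda_{\mathrm{NF}}$ of type $\phi$. Two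 terms of $\Lambda_{\mathrm{NF}}$ are of the same kind if both are variables, or both applications, or both abstractions, and they have the same type. Addresses are finite sequences of positive integers with prefix order $\le$ ($<$ strict), concatenation $\cdot$, empty address $\varepsilon$. Terms are identified with trees: $x$ is $\varepsilon\mapsto x$; $\lambda x.M$ maps $\varepsilon$ to $\lambda x$ with subtree $M$ at $(1)$; $(M_1M_2)$ maps $\varepsilon$ to $@$ with subtrees at $(1),(2)$; $M|_a$ is the subterm at $a$. For a partial tree $\pi$, $\pi|_a$ is $c\mapsto\pi(a\cdot c)$. Let $\mathfrak S$ consist of all formulas (arity 0) and symbols $@_\phi$ (arity 2). A blueprint is a finite partial tree with values in $\mathfrak S$ such that if $\alpha(a)=@_\phi$ then $\alpha|_{a\cdot(1)},\alpha|_{a\cdot(2)}$ have non-empty domains. The relative depth of an address $a$ in a blueprint $\alpha$ is the number of $b\in\mathrm{dom}(\alpha)$ with $b<a$; the relative depth of $\alpha$ is $0$ if $\alpha$ is empty and otherwise the maximal relative depth of an address of $\mathrm{dom}(\alpha)$. The stable part of $M\in\Lambda_{\mathrm{NF}}$ is the set of $a\in\mathrm{dom}(M)$ with $\mathrm{Free}(M|_a)\subseteq\mathrm{Free}(M)$ and $M|_a$ a variable or an application; the blueprint of $M$ maps each $a$ in the stable part to $\psi$ if $M|_a$ is a variable of type $\psi$ and to $@_\psi$ if $M|_a$ is an application of type $\psi$. For $a\in\mathrm{dom}(M)$, $\Lambda(M,a)$ is the sequence $(x_1,\dots,x_k)$ of variables such that $(\lambda x_1,\dots,\lambda x_k)$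 are, in order, the labels of the form $\lambda x$ of $M$ at the prefixes of $a$ (including $a$). A $\Lambda_{\mathrm{NF}}$-inhabitant $M$ of $\phi$ is locally compact if for every $a\in\mathrm{dom}(M)$ the blueprint of $M|_a$ has relative depth at most $|\Lambda(M,a)|\times|\mathrm{Sub}(\phi)|$. *)

From HB Require Import structures.
From mathcomp Require Import all_boot.

Set Implicit Arguments.
Unset Strict Implicit.
Unset Printing Implicit Defensive.

Inductive form : Type :=
| Atom : nat -> form
| Imp : form -> form -> form.

Fixpoint form_eqb (f g : form) : bool :=
  match f, g with
  | Atom m, Atom n => m == n
  | Imp f1 f2, Imp g1 g2 => form_eqb f1 g1 && form_eqb f2 g2
  | _, _ => false
  end.

Lemma form_eqbP : Equality.axiom form_eqb.
Proof.
elim=> [m|f1 IH1 f2 IH2] [n|g1 g2] /=; try by constructor.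
- by apply: (iffP eqP) => [->|[->]].
- by case: (IH1 g1) => [->|H]; case: (IH2 g2) => [->|H'] /=; constructor;
    try congruence.
Qed.

HB.instance Definition _ := hasDecEq.Build form form_eqbP.

Fixpoint subformulas (f : form) : seq form :=
  match f with
  | Atom _ => [:: f]
  | Imp a b => f :: subformulas a ++ subformulas b
  end.

Definition card_Sub (f : form) : nat := size (undup (subformulas f)).

(* Variables are natural numbers (a countably infinite set); the order
   on variables is given by an injective map O : nat -> nat,
   x < y iff O x < O y. Terms are raw lambda-terms (no alpha-conversion). *)
Inductive term : Type :=
| Var : nat -> term
| Lam : nat -> term -> term
| App : term -> term -> term.

Fixpoint fv (M : term) : seq nat :=
  match M with
  | Var x => [:: x]
  | Lam x N => filter (fun y => y != x) (fv N)
  | App N P => fv N ++ fv P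
  end.

Fixpoint bv (M : term) : seq nat :=
  match M with
  | Var _ => [::]
  | Lam x N => x :: bv N
  | App N P => bv N ++ bv P
  end.

Definition wf_term (M : term) : bool :=
  uniq (bv M) && all (fun x => x \notin bv M) (fv M).

Definition Free (O : nat -> nat) (M : term) : seq nat :=
  sort (fun x y => O x <= O y) (undup (fv M)).

Fixpoint hrm (O : nat -> nat) (M : term) : bool :=
  match M with
  | Var _ => true
  | Lam x N => hrm O N && (Free O N != [::]) && (last x (Free O N) == x)
  | App N P => [&& hrm O N, hrm O P &
                 all (fun x => has (fun y => O x <= O y) (Free O P))
                     (Free O N)]
  end.

(* type computation (the HRM conditions are checked separately by hrm) *)
Fixpoint tyof (Om : nat -> form) (M : term) : option form :=
  match M with
  | Var x => Some (Om x)
  | Lam x N => match tyof Om N with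
               | Some psi => Some (Imp (Om x) psi)
               | None => None
               end
  | App N P => match tyof Om N, tyof Om P with
               | Some (Imp chi psi), Some chi' =>
                   if chi == chi' then Some psi else None
               | _, _ => None
               end
  end.

Definition has_type (O : nat -> nat) (Om : nat -> form) (M : term)
  (phi : form) : Prop :=
  hrm O M /\ tyof Om M = Some phi.

Fixpoint beta_normal (M : term) : bool :=
  match M with
  | Var _ => true
  | Lam _ N => beta_normal N
  | App (Lam _ _) _ => false
  | App N P => beta_normal N && beta_normal P
  end.

Definition in_LNF (O : nat -> nat) (Om : nat -> form) (M : term) : Prop :=
  wf_term M /\ beta_normal M /\ exists phi, has_type O Om M phi.

Definition LNF_inhabitant (O : nat -> nat) (Om : nat -> form) (M : term)
  (phi : form) : Prop :=
  wf_term M /\ beta_normal M /\ has_type O Om M phi /\ Free O M = [::].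

Definition address := seq nat.

Fixpoint addrs (M : term) : seq address :=
  match M with
  | Var _ => [:: [::]]
  | Lam _ N => [::] :: map (cons 1) (addrs N)
  | App N P => [::] :: map (cons 1) (addrs N) ++ map (cons 2) (addrs P)
  end.

Definition dom (M : term) : pred address := fun a => a \in addrs M.

Definition term_size (M : term) : nat := size (addrs M).

Fixpoint subt (M : term) (a : address) : option term :=
  match a, M with
  | [::], _ => Some M
  | 1 :: a', Lam _ N => subt N a'
  | 1 :: a', App N _ => subt N a'
  | 2 :: a', App _ P => subt P a'
  | _, _ => None
  end.

Definition addr_lt (b a : address) : bool := prefix b a && (b != a).

Fixpoint lams (M : term) (a : address) : seq nat :=
  match M, a with
  | Lam x _, [::] => [:: x]
  | Lam x N, 1 :: a' => x :: lams N a'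
  | App N _, 1 :: a' => lams N a'
  | App _ P, 2 :: a' => lams P a'
  | _, _ => [::]
  end.

(* Blueprint symbols: formulas (arity 0) and @_phi (arity 2) *)
Inductive bsym : Type :=
| BForm : form -> bsym
| BApp : form -> bsym.

Definition is_var_or_app (M : term) : bool :=
  match M with Lam _ _ => false | _ => true end.

Definition stable (O : nat -> nat) (M : term) (a : address) : bool :=
  match subt M a with
  | Some N => (a \in addrs M) && is_var_or_app N &&
              all (fun x => x \in Free O M) (Free O N)
  | None => false
  end.

(* The blueprint of M, as a finite partial tree: the list of pairs
   (address, label) for the addresses of its domain (the stable part). *)
Definition blueprint (O : nat -> nat) (Om : nat -> form) (M : term)
  : seq (address * bsym) :=
  pmap (fun a =>
          match subt M a with
          | Some (Var x) => Some (a, BForm (Om x))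
          | Some (App N P as Q) =>
              match tyof Om Q with
              | Some psi => Some (a, BApp psi)
              | None => None
              end
          | _ => None
          end)
       [seq a <- addrs M | stable O M a].

Definition rel_depth_addr (alpha : seq (address * bsym)) (a : address) : nat :=
  count (fun b => addr_lt b a) (undup (map fst alpha)).

Definition rel_depth (alpha : seq (address * bsym)) : nat :=
  \max_(a <- map fst alpha) rel_depth_addr alpha a.

Definition locally_compact (O : nat -> nat) (Om : nat -> form) (M : term)
  (phi : form) : Prop :=
  LNF_inhabitant O Om M phi /\
  forall a N, a \in addrs M -> subt M a = Some N ->
    rel_depth (blueprint O Om N) <= size (lams M a) * card_Sub phi.

Definition kind_tag (M : term) : nat :=
  match M with Var _ => 0 | Lam _ _ => 1 | App _ _ => 2 end.

Definition same_kind (Om : nat -> form) (M N : term) : Prop :=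
  kind_tag M = kind_tag N /\
  exists psi, tyof Om M = Some psi /\ tyof Om N = Some psi.

Definition minimal_inhabitant (O : nat -> nat) (Om : nat -> form) (M : term)
  (phi : form) : Prop :=
  LNF_inhabitant O Om M phi /\
  forall N, LNF_inhabitant O Om N phi -> term_size M <= term_size N.

From mathcomp Require Import all_boot.

Set Implicit Arguments.
Unset Strict Implicit.
Unset Printing Implicit Defensive.

(* If M is not locally compact, some subterm N of M, lying under k lambdas of M,
   has a blueprint address c below more than k * |Sub phi| stable addresses.
   These addresses carry applications whose free variables are among the k
   variables bound above N (M is closed) and whose types are subformulas of phi
   (subformula property of normal forms), so two of them, necessarily nested,
   have the same number of free variables and the same type.  As no variable is
   both free and bound in M, the free variables of the inner one are free in the
   outer one, hence both have the same free variables.  Grafting the inner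
   subterm in place of the outer one then yields a strictly smaller
   Lambda_NF-inhabitant of phi. *)

Lemma subt_nil M : subt M [::] = Some M.
Proof. by case: M. Qed.

Lemma subt_dom M a N : subt M a = Some N -> a \in addrs M.
Proof.
elim: M a N => [x|x P IH|P IHP Q IHQ] [|[|[|[|k]]] a] N //=.
- by move=> /IH aP; rewrite in_cons (map_f _ aP) orbT.
- by move=> /IHP aP; rewrite in_cons mem_cat (map_f _ aP) orbT.
- by move=> /IHQ aQ; rewrite in_cons mem_cat (map_f _ aQ) !orbT.
Qed.

Lemma dom_subt M a : a \in addrs M -> exists N, subt M a = Some N.
Proof.
elim: M a => [x|x P IH|P IHP Q IHQ] a /=.
- by rewrite inE => /eqP ->; eauto.
- by rewrite inE => /orP[/eqP->|/mapP[c /IH cP ->]] /=; eauto.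
- rewrite inE mem_cat => /orP[/eqP->|/orP[/mapP[c /IHP cP ->]|/mapP[c /IHQ cQ ->]]];
    by eauto.
Qed.

Lemma subt_cat M a N d : subt M a = Some N -> subt M (a ++ d) = subt N d.
Proof.
elim: M a N => [x|x P IH|P IHP Q IHQ] [|[|[|[|k]]] a] N //=; try by move=> [<-].
all: auto.
Qed.

Lemma term_size_Lam x N : term_size (Lam x N) = (term_size N).+1.
Proof. by rewrite /term_size /= size_map. Qed.

Lemma term_size_App N P : term_size (App N P) = (term_size N + term_size P).+1.
Proof. by rewrite /term_size /= size_cat !size_map. Qed.

Lemma subt_size M a N : a != [::] -> subt M a = Some N -> term_size N < term_size M.
Proof.
elim: M a N => [y|y P IH|P IHP Q IHQ] [|[|[|[|k]]] a] N //= _.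
- rewrite term_size_Lam ltnS; case: a => [|c a]; first by rewrite subt_nil => -[->].
  by move=> /(IH (c :: a) _ isT)/ltnW.
- rewrite term_size_App ltnS; case: a => [|c a]; first by rewrite subt_nil => -[<-]; exact: leq_addr.
  by move=> /(IHP (c :: a) _ isT)/ltnW/leq_trans; apply; exact: leq_addr.
- rewrite term_size_App ltnS; case: a => [|c a]; first by rewrite subt_nil => -[<-]; exact: leq_addl.
  by move=> /(IHQ (c :: a) _ isT)/ltnW/leq_trans; apply; exact: leq_addl.
Qed.

Lemma subt_fv_lams M a N x : subt M a = Some N -> x \in fv N ->
  (x \in fv M) || (x \in lams M a).
Proof.
elim: M a N => [y|y P IH|P IHP Q IHQ] [|[|[|[|k]]] a] N //=; try by move=> [<-] ->.
- by move=> /IH xP /xP; rewrite mem_filter inE; case: (x =P y).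
- by move=> /IHP xP /xP; rewrite mem_cat; case/orP=> ->; rewrite ?orbT.
- by move=> /IHQ xQ /xQ; rewrite mem_cat; case/orP=> ->; rewrite ?orbT.
Qed.

Lemma lams_bv M a : {subset lams M a <= bv M}.
Proof.
move=> x; elim: M a => [y|y P IH|P IHP Q IHQ] [|[|[|[|k]]] a] //=; rewrite ?inE ?mem_cat.
- by move=> ->.
- by case/orP=> [->|/IH ->]; rewrite ?orbT.
- by move/IHP ->.
- by move/IHQ ->; rewrite orbT.
Qed.

Lemma subt_bv_subseq M a N : subt M a = Some N -> subseq (bv N) (bv M).
Proof.
elim: M a N => [y|y P IH|P IHP Q IHQ] [|[|[|[|k]]] a] N E; rewrite /= in E;
  try by [|case: E => <-].
- exact: subseq_trans (IH _ _ E) (subseq_cons _ _).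
- exact: subseq_trans (IHP _ _ E) (prefix_subseq _ _).
- exact: subseq_trans (IHQ _ _ E) (suffix_subseq _ _).
Qed.

Lemma subt_bv M a N : subt M a = Some N -> {subset bv N <= bv M}.
Proof. by move/subt_bv_subseq/mem_subseq. Qed.

Lemma subt_fv_bv M a N x : uniq (bv M) -> subt M a = Some N ->
  x \in bv N -> x \in fv N -> x \in fv M.
Proof.
elim: M a N => [y|y P IH|P IHP Q IHQ] [|[|[|[|k]]] a] N //=; try by move=> _ [<-].
- case/andP=> yP U E bN fN; rewrite mem_filter (IH _ _ U E bN fN) andbT.
  by apply: contraNneq yP => <-; exact: (subt_bv E bN).
- by rewrite cat_uniq => /and3P[U _ _] E bN fN; rewrite mem_cat (IHP _ _ U E bN fN).
- by rewrite cat_uniq => /and3P[_ _ U] E bN fN; rewrite mem_cat (IHQ _ _ U E bN fN) orbT.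
Qed.

Lemma wf_term_subt M a N : wf_term M -> subt M a = Some N -> wf_term N.
Proof.
case/andP=> U /allP fvM E; apply/andP; split; first exact: subseq_uniq (subt_bv_subseq E) U.
apply/allP=> x xN; apply/negP=> xb.
by have /negP := fvM x (subt_fv_bv U E xb xN); apply; exact: (subt_bv E xb).
Qed.

Lemma beta_normal_App N P :
  beta_normal (App N P) = [&& is_var_or_app N, beta_normal N & beta_normal P].
Proof. by case: N. Qed.

Lemma beta_normal_subt M a N : beta_normal M -> subt M a = Some N -> beta_normal N.
Proof.
elim: M a N => [y|y P IH|P IHP Q IHQ] [|[|[|[|k]]] a] N;
  rewrite ?beta_normal_App //=; try by move=> B [<-]; rewrite ?beta_normal_App.
- exact: IH.
- by case/and3P=> _ B _; exact: IHP.
- by case/and3P=> _ _ B; exact: IHQ.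
Qed.

Lemma hrm_subt O M a N : hrm O M -> subt M a = Some N -> hrm O N.
Proof.
elim: M a N => [y|y P IH|P IHP Q IHQ] [|[|[|[|k]]] a] N //=; try by move=> H [<-].
- by case/andP=> /andP[H _] _; exact: IH.
- by case/and3P=> H _ _; exact: IHP.
- by case/and3P=> _ H _; exact: IHQ.
Qed.

Lemma mem_Free O M x : (x \in Free O M) = (x \in fv M).
Proof. by rewrite /Free mem_sort mem_undup. Qed.

Lemma Free_uniq O M : uniq (Free O M).
Proof. by rewrite /Free sort_uniq undup_uniq. Qed.

Lemma eq_Free O A B : injective O -> fv A =i fv B -> Free O A = Free O B.
Proof.
move=> injO eqAB; rewrite /Free; apply/perm_sortP.
- by move=> x y; exact: leq_total.
- by move=> y x z; exact: leq_trans.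
- by move=> x y /anti_leq /injO.
- by apply: uniq_perm; rewrite ?undup_uniq // => x; rewrite !mem_undup eqAB.
Qed.

Lemma subformulas_refl f : f \in subformulas f.
Proof. by case: f => *; rewrite inE eqxx. Qed.

Lemma subformulas_trans f g :
  g \in subformulas f -> {subset subformulas g <= subformulas f}.
Proof.
elim: f => [n|a IHa b IHb] /=; first by rewrite inE => /eqP->.
rewrite inE mem_cat => /orP[/eqP->//|/orP[/IHa gf|/IHb gf]] x /gf xf;
  by rewrite inE mem_cat xf ?orbT.
Qed.

Lemma subformulas_Imp_l a b : a \in subformulas (Imp a b).
Proof. by rewrite /= inE mem_cat subformulas_refl orbT. Qed.

Lemma subformulas_Imp_r a b : b \in subformulas (Imp a b).
Proof. by rewrite /= inE mem_cat subformulas_refl !orbT. Qed.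

Lemma tyof_App_inv Om P Q t : tyof Om (App P Q) = Some t ->
  exists chi, tyof Om P = Some (Imp chi t) /\ tyof Om Q = Some chi.
Proof.
rewrite /=; case: (tyof Om P) => [[|chi t']|] //; case: (tyof Om Q) => // c.
by case: eqP => // -> [<-]; eauto.
Qed.

Lemma tyof_Lam_inv Om x P t : tyof Om (Lam x P) = Some t ->
  exists u, tyof Om P = Some u /\ t = Imp (Om x) u.
Proof. by rewrite /=; case: (tyof Om P) => // u [<-]; eauto. Qed.

Lemma neutral_fv N : beta_normal N -> is_var_or_app N -> exists y, y \in fv N.
Proof.
elim: N => [x|x P IH|P IHP Q IHQ] //; first by exists x; rewrite inE.
rewrite beta_normal_App => /and3P[V B _] _.
by have [y yP] := IHP B V; exists y; rewrite /= mem_cat yP.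
Qed.

Lemma neutral_tyof Om N t : beta_normal N -> is_var_or_app N ->
  tyof Om N = Some t -> exists2 y, y \in fv N & t \in subformulas (Om y).
Proof.
elim: N t => [x|x P IH|P IHP Q IHQ] t //.
  by move=> _ _ [<-]; exists x; rewrite ?inE ?subformulas_refl.
rewrite beta_normal_App => /and3P[V B _] _ /tyof_App_inv [chi [EP _]].
have [y yP ty] := IHP _ B V EP; exists y; first by rewrite /= mem_cat yP.
exact: subformulas_trans ty _ (subformulas_Imp_r _ _).
Qed.

Lemma subt_tyof_subformula Om N t d Q : beta_normal N -> tyof Om N = Some t ->
  subt N d = Some Q -> exists2 u, tyof Om Q = Some u &
    u \in subformulas t \/ exists2 y, y \in fv N & u \in subformulas (Om y).
Proof.
elim: N t d Q => [x|x P IH|P IHP R IHR] t [|[|[|[|k]]] d] Q //;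
  rewrite ?subt_nil; try by move=> _ E [<-]; exists t; rewrite ?subformulas_refl; auto.
- move=> /= B /tyof_Lam_inv [u [Eu ->]] E.
  have [v Ev [vu|[y yP vy]]] := IH _ _ _ B Eu E; exists v => //.
    by left; exact: subformulas_trans (subformulas_Imp_r _ _) _ vu.
  case: (eqVneq y x) vy => [-> vx|neq vy].
    by left; exact: subformulas_trans (subformulas_Imp_l _ _) _ vx.
  by right; exists y; rewrite // mem_filter yP andbT.
- rewrite beta_normal_App => /and3P[V B _] /tyof_App_inv [chi [EP _]] /= E.
  have [y yP ty] := neutral_tyof B V EP.
  have [v Ev [vt|[z zP vz]]] := IHP _ _ _ B EP E; exists v => //; right.
    by exists y; rewrite ?mem_cat ?yP //; exact: subformulas_trans ty _ vt.
  by exists z; rewrite ?mem_cat ?zP.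
- rewrite beta_normal_App => /and3P[V BP BR] /tyof_App_inv [chi [EP ER]] /= E.
  have [y yP ty] := neutral_tyof BP V EP.
  have [v Ev [vt|[z zP vz]]] := IHR _ _ _ BR ER E; exists v => //; right.
    exists y; rewrite ?mem_cat ?yP //.
    by apply: (subformulas_trans ty); exact: (subformulas_trans (subformulas_Imp_l _ t)).
  by exists z; rewrite ?mem_cat ?zP ?orbT.
Qed.

Fixpoint repl (M : term) (a : address) (Q : term) : term :=
  match a, M with
  | [::], _ => Q
  | 1 :: a', Lam x N => Lam x (repl N a' Q)
  | 1 :: a', App N P => App (repl N a' Q) P
  | 2 :: a', App N P => App N (repl P a' Q)
  | _, _ => M
  end.

Lemma repl_nil M Q : repl M [::] Q = Q.
Proof. by case: M. Qed.

Lemma repl_size M a P Q : subt M a = Some P -> term_size Q < term_size P ->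
  term_size (repl M a Q) < term_size M.
Proof.
elim: M a P => [y|y P1 IH|P1 IHP Q1 IHQ] [|[|[|[|k]]] a] PP //=;
  rewrite ?subt_nil ?repl_nil; try by case=> <-.
- by rewrite !term_size_Lam ltnS => /IH.
- by rewrite !term_size_App ltnS ltn_add2r => /IHP.
- by rewrite !term_size_App ltnS ltn_add2l => /IHQ.
Qed.

Lemma repl_tyof Om M a P Q : subt M a = Some P -> tyof Om Q = tyof Om P ->
  tyof Om (repl M a Q) = tyof Om M.
Proof.
elim: M a P => [y|y P1 IH|P1 IHP Q1 IHQ] [|[|[|[|k]]] a] PP //=;
  rewrite ?subt_nil ?repl_nil; try by case=> <-.
- by move=> /IH eP /eP ->.
- by move=> /IHP eP /eP ->.
- by move=> /IHQ eQ /eQ ->.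
Qed.

Lemma repl_kind_tag M a P Q : subt M a = Some P -> kind_tag Q = kind_tag P ->
  kind_tag (repl M a Q) = kind_tag M.
Proof.
by elim: M a P => [y|y P1 IH|P1 IHP Q1 IHQ] [|[|[|[|k]]] a] PP //=;
  rewrite ?subt_nil ?repl_nil; case=> <-.
Qed.

Lemma repl_beta_normal M a P Q : subt M a = Some P -> kind_tag Q = kind_tag P ->
  beta_normal Q -> beta_normal M -> beta_normal (repl M a Q).
Proof.
elim: M a P => [y|y P1 IH|P1 IHP Q1 IHQ] [|[|[|[|k]]] a] PP //;
  rewrite ?subt_nil ?repl_nil; try by case=> <-.
- exact: IH.
- move=> E K BQ; rewrite /= in E; rewrite [repl _ _ _]/= !beta_normal_App.
  case/and3P=> V B1 B2; rewrite (IHP _ _ E K BQ B1) B2 andbT.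
  by move: V (repl_kind_tag E K); case: (repl _ _ _); case: P1 {IHP E B1}.
- move=> E K BQ; rewrite /= in E; rewrite [repl _ _ _]/= !beta_normal_App.
  by case/and3P=> V B1 B2; rewrite (IHQ _ _ E K BQ B2) V B1.
Qed.

Lemma repl_fv M a P Q : subt M a = Some P -> fv Q =i fv P -> fv (repl M a Q) =i fv M.
Proof.
elim: M a P => [y|y P1 IH|P1 IHP Q1 IHQ] [|[|[|[|k]]] a] PP //=;
  rewrite ?subt_nil ?repl_nil; try by case=> <-.
- by move=> /IH eP /eP eQ x; rewrite !mem_filter eQ.
- by move=> /IHP eP /eP eQ x; rewrite !mem_cat eQ.
- by move=> /IHQ eP /eP eQ x; rewrite !mem_cat eQ.
Qed.

Lemma repl_hrm O M a P Q : injective O -> subt M a = Some P -> fv Q =i fv P ->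
  hrm O Q -> hrm O M -> hrm O (repl M a Q).
Proof.
move=> injO; elim: M a P => [y|y P1 IH|P1 IHP Q1 IHQ] [|[|[|[|k]]] a] PP //=;
  rewrite ?subt_nil ?repl_nil; try by case=> <-.
- move=> E F HQ /andP[/andP[H1 H2] H3].
  by rewrite (IH _ _ E F HQ H1) (eq_Free injO (repl_fv E F)) H2 H3.
- move=> E F HQ /and3P[H1 H2 H3].
  by rewrite (IHP _ _ E F HQ H1) (eq_Free injO (repl_fv E F)) H2 H3.
- move=> E F HQ /and3P[H1 H2 H3].
  by rewrite (IHQ _ _ E F HQ H2) (eq_Free injO (repl_fv E F)) H1 H3.
Qed.

Lemma repl_bv_subseq M a P Q : subt M a = Some P -> subseq (bv Q) (bv P) ->
  subseq (bv (repl M a Q)) (bv M).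
Proof.
elim: M a P => [y|y P1 IH|P1 IHP Q1 IHQ] [|[|[|[|k]]] a] PP E; rewrite /= in E;
  rewrite ?repl_nil; try by [|case: E => <-].
- by move/(IH _ _ E) => /= sQ; rewrite eqxx.
- by move/(IHP _ _ E) => sQ; apply: cat_subseq sQ (subseq_refl _).
- by move/(IHQ _ _ E) => sQ; apply: cat_subseq (subseq_refl _) sQ.
Qed.

Lemma pigeonhole_seq (T1 T2 : eqType) (f : T1 -> T2) (s : seq T1) (r : seq T2) :
  uniq s -> {subset map f s <= r} -> size r < size s ->
  exists x y, [/\ x \in s, y \in s, x != y & f x = f y].
Proof.
case: s => [//|x0 s0] Us sub lt.
have /(uniqPn (f x0)) [i [j [ij js E]]] : ~~ uniq (map f (x0 :: s0)).
  by apply/negP=> U; move: (uniq_leq_size U sub); rewrite size_map leqNgt lt.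
rewrite size_map in js; have is0 := ltn_trans ij js.
rewrite !(nth_map x0) // in E.
exists (nth x0 (x0 :: s0) i), (nth x0 (x0 :: s0) j).
by rewrite !mem_nth // nth_uniq // ltn_eqF.
Qed.

Lemma prefix_comparable (T : eqType) (s1 s2 s : seq T) :
  prefix s1 s -> prefix s2 s -> prefix s1 s2 || prefix s2 s1.
Proof.
rewrite !prefixE => /eqP E1 /eqP E2.
have [le|/ltnW le] := leqP (size s1) (size s2).
- by rewrite -E2 take_takel // E1 eqxx.
- by rewrite -E1 take_takel // E2 eqxx orbT.
Qed.

Lemma rel_depth_witness alpha n : n < rel_depth alpha ->
  exists2 c, c \in map fst alpha & n < rel_depth_addr alpha c.
Proof.
move=> lt; apply/hasP; apply: contraLR lt; rewrite -leqNgt => /hasPn deep.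
by apply/bigmax_leqP_seq => c cP _; rewrite leqNgt; exact: deep.
Qed.

Lemma mem_map_fst_pmap (A : eqType) (B : Type) (g : A -> option (A * B)) s c :
  (forall a p, g a = Some p -> p.1 = a) -> c \in map fst (pmap g s) -> c \in s.
Proof.
move=> gfst; elim: s => //= a s IH; case E: (g a) => [p|] /=; rewrite !inE.
  by case/orP=> [/eqP->|/IH ->]; rewrite ?(gfst _ _ E) ?eqxx ?orbT.
by move/IH ->; rewrite orbT.
Qed.

Lemma blueprint_stable O Om N c :
  c \in map fst (blueprint O Om N) -> stable O N c.
Proof.
move/mem_map_fst_pmap; rewrite mem_filter => /(_ _) /andP[] // a p.
case: (subt N a) => // -[y|y P|P Q] //; first by case=> <-.
by case: (tyof Om (App P Q)) => // psi [<-].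
Qed.

Lemma stable_dom O N c : stable O N c -> c \in addrs N.
Proof. by rewrite /stable; case: (subt N c) => // Q /andP[/andP[-> _] _]. Qed.

Lemma stable_strict_ancestor O N e c : stable O N e -> addr_lt e c -> c \in addrs N ->
  exists P1 P2, subt N e = Some (App P1 P2) /\ {subset fv (App P1 P2) <= fv N}.
Proof.
rewrite /stable; case E: (subt N e) => [Q|] //= /andP[/andP[_ VA] /allP FN].
case/andP=> /prefixP[d ->] ne /dom_subt[R]; rewrite (subt_cat _ E).
case: Q E VA FN => // [y|P1 P2] E _ FN; last first.
  exists P1, P2; split=> // x xQ; rewrite -(mem_Free O); apply: FN.
  by rewrite mem_Free.
by case: d ne => [|[|[|[|k]]] d] //; rewrite cats0 eqxx.
Qed.

(* A free variable of Q' bound inside Q would be both free and bound in N. *)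
Lemma nested_Free_eq O N e d Q Q' : injective O -> wf_term N ->
  subt N e = Some Q -> subt Q d = Some Q' -> {subset fv Q' <= fv N} ->
  size (Free O Q) = size (Free O Q') -> Free O Q = Free O Q'.
Proof.
move=> injO /andP[_ /allP fvN] EQ EQ' sub sz.
have sub' : {subset Free O Q' <= Free O Q}.
  move=> x; rewrite !mem_Free => xQ'.
  case/orP: (subt_fv_lams EQ' xQ') => // /lams_bv xb.
  by have := fvN x (sub x xQ'); rewrite (subt_bv EQ xb).
have [_ eqQ] := uniq_min_size (Free_uniq O Q') sub' (eq_leq sz).
by apply: eq_Free => // x; rewrite -!(mem_Free O) eqQ.
Qed.

Definition profiles (K : nat) (phi : form) : seq (nat * option form) :=
  [seq (i, Some t) | i <- iota 1 K, t <- undup (subformulas phi)].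

Lemma size_profiles K phi : size (profiles K phi) = K * card_Sub phi.
Proof. by rewrite size_allpairs size_iota. Qed.

Definition twin_addresses O Om M (b b' : address) : Prop :=
  exists Nb Nb', [/\ addr_lt b b', subt M b = Some Nb, subt M b' = Some Nb',
                     same_kind Om Nb Nb' & Free O Nb = Free O Nb'].

Section ClosedInhabitant.

Variables (O : nat -> nat) (Om : nat -> form) (M : term) (phi : form).
Hypotheses (injO : injective O) (LI : LNF_inhabitant O Om M phi).

Lemma closed_fv x : x \notin fv M.
Proof. by case: LI => _ [_ [_ CL]]; rewrite -(mem_Free O) CL. Qed.

Lemma closed_subt_fv a N : subt M a = Some N -> {subset fv N <= lams M a}.
Proof. by move=> EN x /(subt_fv_lams EN); rewrite (negbTE (closed_fv x)). Qed.

Lemma closed_subt_tyof a N : subt M a = Some N ->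
  exists2 u, tyof Om N = Some u & u \in subformulas phi.
Proof.
case: LI => _ [BN [[_ TY] _]] EN.
have [u Eu [//|[y yM _]]] := subt_tyof_subformula BN TY EN; exists u => //.
by rewrite (negbTE (closed_fv y)) in yM.
Qed.

Lemma closed_profile a N e Q : subt M a = Some N -> subt N e = Some Q ->
  is_var_or_app Q -> {subset fv Q <= fv N} ->
  (size (Free O Q), tyof Om Q) \in profiles (size (lams M a)) phi.
Proof.
move=> EN EQ VQ sub; have EMQ : subt M (a ++ e) = Some Q by rewrite (subt_cat _ EN).
have [u -> uphi] := closed_subt_tyof EMQ.
apply/allpairsP; exists (size (Free O Q), u); split; rewrite ?mem_undup //=.
rewrite mem_iota add1n ltnS; apply/andP; split.
  have [BN _] := LI.2.
  have [y yQ] := neutral_fv (beta_normal_subt BN EMQ) VQ.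
  by rewrite -(mem_Free O) in yQ; case: (Free O Q) yQ.
apply: uniq_leq_size (Free_uniq O Q) _ => x; rewrite mem_Free => /sub.
exact: closed_subt_fv EN x.
Qed.

Lemma not_locally_compact_deep : ~ locally_compact O Om M phi ->
  exists a N, subt M a = Some N /\
    size (lams M a) * card_Sub phi < rel_depth (blueprint O Om N).
Proof.
move=> NLC.
have /allPn[a _] : ~~ all (fun a => if subt M a is Some N then
      rel_depth (blueprint O Om N) <= size (lams M a) * card_Sub phi else true)
    (addrs M).
  by apply/negP=> /allP compact; apply: NLC; split=> // a N /compact + EN; rewrite EN.
by case EN: (subt M a) => [N|] //; rewrite -ltnNge; exists a, N.
Qed.

Lemma nested_twins a N e1 e2 Q1 Q2 : subt M a = Some N -> addr_lt e1 e2 ->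
  subt N e1 = Some Q1 -> subt N e2 = Some Q2 -> kind_tag Q1 = kind_tag Q2 ->
  {subset fv Q2 <= fv N} ->
  (size (Free O Q1), tyof Om Q1) = (size (Free O Q2), tyof Om Q2) ->
  twin_addresses O Om M (a ++ e1) (a ++ e2).
Proof.
move=> EN lt E1 E2 K sub2 [sz ty].
have [d Ed] : exists d, e2 = e1 ++ d by case/andP: lt => /prefixP.
have E12 : subt Q1 d = Some Q2 by rewrite -(subt_cat _ E1) -Ed.
have [u Eu _] := closed_subt_tyof (etrans (subt_cat _ EN) E1).
exists Q1, Q2; split; rewrite ?(subt_cat _ EN) //.
- by rewrite /addr_lt prefix_catr // eqseq_cat // eqxx.
- by split=> //; exists u; rewrite -ty.
- exact: nested_Free_eq injO (wf_term_subt LI.1 EN) E1 E12 sub2 sz.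
Qed.

Lemma not_locally_compact_twins : ~ locally_compact O Om M phi ->
  exists b b', twin_addresses O Om M b b'.
Proof.
move=> /not_locally_compact_deep[a [N [EN /rel_depth_witness[c cbp]]]].
have cN := stable_dom (blueprint_stable cbp).
rewrite /rel_depth_addr -size_filter -size_profiles; set T := filter _ _ => deep.
have ancT e : e \in T -> prefix e c /\
    exists P1 P2, subt N e = Some (App P1 P2) /\ {subset fv (App P1 P2) <= fv N}.
  rewrite mem_filter mem_undup => /andP[lt /blueprint_stable Se].
  by split; [case/andP: lt | exact: stable_strict_ancestor Se lt cN].
pose prof e := if subt N e is Some Q then (size (Free O Q), tyof Om Q) else (0, None).
have range : {subset map prof T <= profiles (size (lams M a)) phi}.
  move=> _ /mapP[e /ancT[_ [P1 [P2 [Ee sub]]]] ->]; rewrite /prof Ee.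
  exact: closed_profile EN Ee _ sub.
have UT : uniq T by rewrite filter_uniq ?undup_uniq.
have [e1 [e2 [T1 T2 ne Eprof]]] := pigeonhole_seq UT range deep.
have [c1 [P1 [P2 [E1 sub1]]]] := ancT e1 T1.
have [c2 [R1 [R2 [E2 sub2]]]] := ancT e2 T2.
move: Eprof; rewrite /prof E1 E2 => Eprof.
case/orP: (prefix_comparable c1 c2) => pr.
- exists (a ++ e1), (a ++ e2); apply: nested_twins EN _ E1 E2 _ sub2 Eprof => //.
  by rewrite /addr_lt pr.
- exists (a ++ e2), (a ++ e1); apply: nested_twins EN _ E2 E1 _ sub1 (esym Eprof) => //.
  by rewrite /addr_lt pr eq_sym.
Qed.

(* The smaller inhabitant is M with its subterm at b replaced by the one at b'. *)
Lemma twin_collapse b b' : twin_addresses O Om M b b' ->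
  exists2 M', LNF_inhabitant O Om M' phi & term_size M' < term_size M.
Proof.
case=> Nb [Nb' [lt Eb Eb' [K [psi [T1 T2]]] EF]].
have [d Ed] : exists d, b' = b ++ d by case/andP: lt => /prefixP.
have Ebd : subt Nb d = Some Nb' by rewrite -(subt_cat _ Eb) -Ed.
have dne : d != [::].
  by case/andP: lt => _; rewrite Ed; apply: contraNneq => ->; rewrite cats0.
have Fv : fv Nb' =i fv Nb by move=> x; rewrite -!(mem_Free O) EF.
have [/andP[UB _] [BN [[HR TY] CL]]] := LI.
exists (repl M b Nb'); last exact: repl_size Eb (subt_size dne Ebd).
split.
  apply/andP; split.
    exact: subseq_uniq (repl_bv_subseq Eb (subt_bv_subseq Ebd)) UB.
  by apply/allP => x; rewrite (repl_fv Eb Fv) (negbTE (closed_fv x)).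
split; first exact: repl_beta_normal Eb (esym K) (beta_normal_subt BN Eb') BN.
split; first split.
- exact: repl_hrm injO Eb Fv (hrm_subt HR Eb') HR.
- by rewrite (repl_tyof Eb) ?T1 ?T2.
- by rewrite -CL; apply: eq_Free injO (repl_fv Eb Fv).
Qed.

End ClosedInhabitant.

Theorem lemma3p5
  (O : nat -> nat) (HO : injective O)
  (Om : nat -> form) (HOm : forall (psi : form) (n : nat),
                              exists x, n < x /\ Om x = psi)
  (phi : form) (M : term) :
  LNF_inhabitant O Om M phi ->
  ~ locally_compact O Om M phi ->
  (exists (b b' : address) (Nb Nb' : term),
      addr_lt b b' /\ b \in addrs M /\ b' \in addrs M /\
      subt M b = Some Nb /\ subt M b' = Some Nb' /\
      same_kind Om Nb Nb' /\ Free O Nb = Free O Nb')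
  /\ ~ minimal_inhabitant O Om M phi.
Proof.
move=> LI NLC; have [b [b' twin]] := not_locally_compact_twins HO LI NLC.
split.
  case: (twin) => Nb [Nb' [lt Eb Eb' SK EF]].
  by exists b, b', Nb, Nb'; rewrite (subt_dom Eb) (subt_dom Eb').
case=> _ minM; have [M' LI' lt] := twin_collapse HO LI twin.
by move: (minM M' LI'); rewrite leqNgt lt.
Qed.
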